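(* Let $C$ be an ensemble choice aggregator that respects model choice reversal. Let $y,y'\in Y$ and $z,z'\in S(Y)$ be such that for every $j\in\{1,\dots,m\}$ we have $z_{j,d(y)}>z_{j,d(y')}$ if and only if $z'_{j,d(y)}>z'_{j,d(y')}$. Then $C(\{y,y'\},z)=C(\{y,y'\},z')$.
   Context: Let $Y$ be a nonempty set of labels and $m\ge 2$ an integer (the number of models). For each $j\in\{1,\dots,m\}$ let $S_j(Y)\subseteq\mathbb{R}^{|Y|}$ be a set of score vectors whose coordinates are indexed by labels, and let $S(Y)=\prod_{j=1}^m S_j(Y)$. An element $z\in S(Y)$ is written $z=(z_{j,d(y)})_{j,y}$, where $z_{j,d(y)}$ denotes model $j$'s score for label $y$. An ensemble choice aggregator is a set-valued function $C:(2^Y\setminus\{\emptyset\})\times S(Y)\to 2^Y\setminus\{\emptyset\}$ such that for every nonempty $Y^*\subseteq Y$ and every $z\in S(Y)$: (i) $C(Y^*,z)\subseteq Y^*$; and (ii) for every $y\in Y^*$, if there does not exist $y'\in Y^*$ with $\{y'\}=C(\{y,y'\},z)$, then $y\in C(Y^*,z)$. $C$ respects model choice reversal if for all $y,y'\in Y$ and all $z,z'\in S(Y)$: whenever $y\in C(\{y,y'\},z)$, $y'\notin C(\{y,y'\},z)$, and $y'\in C(\{y,y'\},z')$, there exists $j$ such that $z_{j,d(y)}>z_{j,d(y')}$ and $z'_{j,d(y)}<z'_{j,d(y')}$. *)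

From mathcomp Require Import all_boot all_order all_algebra.
From mathcomp Require Import boolp classical_sets reals.
Set Implicit Arguments. Unset Strict Implicit. Unset Printing Implicit Defensive.
Import Order.TTheory GRing.Theory Num.Theory.
Local Open Scope classical_set_scope.
Local Open Scope ring_scope.

(* A score profile z assigns to each model j : 'I_m and label y the score
   z j y (this is z_{j,d(y)}). *)
Definition profiles (R : realType) (Y : Type) (m : nat)
  (S : 'I_m -> set (Y -> R)) : set ('I_m -> Y -> R) :=
  [set z | forall j, S j (z j)].

Definition ensemble_choice_aggregator (R : realType) (Y : Type) (m : nat)
  (S : 'I_m -> set (Y -> R))
  (C : set Y -> ('I_m -> Y -> R) -> set Y) : Prop :=
  forall (Ys : set Y) (z : 'I_m -> Y -> R),
    Ys !=set0 -> profiles S z ->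
    [/\ C Ys z !=set0,
        C Ys z `<=` Ys &
        forall y, Ys y ->
          ~ (exists y', Ys y' /\ C [set y; y'] z = [set y']) ->
          C Ys z y].

Definition respects_model_choice_reversal (R : realType) (Y : Type) (m : nat)
  (S : 'I_m -> set (Y -> R))
  (C : set Y -> ('I_m -> Y -> R) -> set Y) : Prop :=
  forall (y y' : Y) (z z' : 'I_m -> Y -> R),
    profiles S z -> profiles S z' ->
    C [set y; y'] z y -> ~ C [set y; y'] z y' -> C [set y; y'] z' y' ->
    exists j : 'I_m, z j y > z j y' /\ z' j y < z' j y'.

From mathcomp Require Import all_boot all_order all_algebra.
From mathcomp Require Import boolp classical_sets reals.
Set Implicit Arguments. Unset Strict Implicit. Unset Printing Implicit Defensive.
Import Order.TTheory GRing.Theory Num.Theory.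
Local Open Scope classical_set_scope.
Local Open Scope ring_scope.

(* If x is chosen from {y, y'} at z but not at z', then the other label is the
   unique choice at z', and model choice reversal (from z' back to z) produces
   a model ranking y and y' strictly one way at z' and strictly the other way
   at z, which the hypothesis forbids. *)

Section PairChoice.

Variables (R : realType) (Y : Type) (m : nat).
Variables (S : 'I_m -> set (Y -> R)) (C : set Y -> ('I_m -> Y -> R) -> set Y).

Lemma aggregator_pair_choice_other (a b : Y) (z : 'I_m -> Y -> R) :
  ensemble_choice_aggregator S C -> profiles S z ->
  ~ C [set a; b] z a -> C [set a; b] z b.
Proof.
move=> agg Pz notCa.
have [nonempty sub _] := agg [set a; b] z (ex_intro _ a (or_introl erefl)) Pz.
case: nonempty => x Cx.
by case: (sub x Cx) => /= x_eq; rewrite x_eq in Cx.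
Qed.

Lemma reversal_strict_choice_stable (a b : Y) (u v : 'I_m -> Y -> R) :
  respects_model_choice_reversal S C -> profiles S u -> profiles S v ->
  (forall j, u j b < u j a -> v j b <= v j a) ->
  C [set a; b] u a -> ~ C [set a; b] u b -> ~ C [set a; b] v b.
Proof.
move=> rev Pu Pv mono Ca notCb Cvb.
have [j [u_ab v_ab]] := rev a b u v Pu Pv Ca notCb Cvb.
by move: (mono j u_ab); rewrite leNgt v_ab.
Qed.

Lemma pair_choice_sub (y y' : Y) (z z' : 'I_m -> Y -> R) :
  ensemble_choice_aggregator S C -> respects_model_choice_reversal S C ->
  profiles S z -> profiles S z' ->
  (forall j, z j y > z j y' <-> z' j y > z' j y') ->
  C [set y; y'] z `<=` C [set y; y'] z'.
Proof.
move=> agg rev Pz Pz' same x Cx; apply/not_notP => notCx'.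
have [_ sub _] := agg [set y; y'] z (ex_intro _ y (or_introl erefl)) Pz.
case: (sub x Cx) => /= x_eq; rewrite {x}x_eq in Cx notCx'.
- have Cy' := aggregator_pair_choice_other agg Pz' notCx'.
  rewrite setUC in Cx notCx' Cy'.
  apply: (reversal_strict_choice_stable rev Pz' Pz _ Cy' notCx' Cx) => j lt_z'.
  by rewrite leNgt; apply: contraTN lt_z' => /same; rewrite -leNgt => /ltW.
- have Cy : C [set y; y'] z' y.
    by rewrite setUC; apply: (aggregator_pair_choice_other agg Pz'); rewrite setUC.
  apply: (reversal_strict_choice_stable rev Pz' Pz _ Cy notCx' Cx) => j lt_z'.
  exact/ltW/same.
Qed.

End PairChoice.

Theorem lemma2 (R : realType) (Y : Type) (m : nat) (hm : (2 <= m)%N)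
  (S : 'I_m -> set (Y -> R))
  (C : set Y -> ('I_m -> Y -> R) -> set Y) :
  ensemble_choice_aggregator S C ->
  respects_model_choice_reversal S C ->
  forall (y y' : Y) (z z' : 'I_m -> Y -> R),
    profiles S z -> profiles S z' ->
    (forall j : 'I_m, z j y > z j y' <-> z' j y > z' j y') ->
    C [set y; y'] z = C [set y; y'] z'.
Proof.
move=> agg rev y y' z z' Pz Pz' same.
apply/seteqP; split; apply: (pair_choice_sub agg rev) => // j.
exact: iff_sym.
Qed.
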